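(* Let $N,\mu,\beta,\sigma,\gamma,p>0$ and $0<\rho<1$ and consider $$\begin{aligned}S'&=\mu N-\tfrac{\beta}{N}S(1-\rho)I-\tfrac{p}{N}S-\mu S, & E'&=\tfrac{\beta}{N}S(1-\rho)I-(\sigma+\mu) E, & I'&=\sigma E-(\gamma+\mu) I,\\ R'&=\gamma I-\mu R, & V'&=\tfrac{p}{N}S-\mu V,\end{aligned}$$ on the invariant region $\Sigma=\{(S,E,I,R,V)\in\mathbb{R}_+^5: S+E+I+R+V=N\}$. Let $\mathcal{R}_0=\dfrac{\mu N\sigma\beta(1-\rho)}{(\sigma+\mu)(\gamma+\mu)(p+\mu N)}$. If $\mathcal{R}_0<1$, then the disease-free equilibrium $P^*=\left(\frac{\mu N^2}{p+\mu N},0,0,0,\frac{pN}{p+\mu N}\right)$ is globally asymptotically stable in $\Sigma$.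
   Context: SEIR model with vaccination at constant effective rate $p$ and equal birth/death rate $\mu$. Global asymptotic stability in $\Sigma$ means $P^*$ is stable and every solution starting in $\Sigma$ converges to $P^*$ as $t\to+\infty$. *)

From Stdlib Require Import Reals.
From Coquelicot Require Import Coquelicot.
Open Scope R_scope.

Definition in_Sigma (N s e i r v : R) : Prop :=
  0 <= s /\ 0 <= e /\ 0 <= i /\ 0 <= r /\ 0 <= v /\ s + e + i + r + v = N.

Definition basic_repr_number (N mu beta sigma gamma p rho : R) : R :=
  mu * N * sigma * beta * (1 - rho) / ((sigma + mu) * (gamma + mu) * (p + mu * N)).

Definition Sstar (N mu p : R) : R := mu * N ^ 2 / (p + mu * N).
Definition Vstar (N mu p : R) : R := p * N / (p + mu * N).

Definition dist_Pstar (N mu p s e i r v : R) : R :=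
  Rmax (Rabs (s - Sstar N mu p))
   (Rmax (Rabs e) (Rmax (Rabs i) (Rmax (Rabs r) (Rabs (v - Vstar N mu p))))).

Definition is_solution (N mu beta sigma gamma p rho : R)
  (S E I Rr V : R -> R) : Prop :=
  (filterlim S (at_right 0) (locally (S 0)) /\
   filterlim E (at_right 0) (locally (E 0)) /\
   filterlim I (at_right 0) (locally (I 0)) /\
   filterlim Rr (at_right 0) (locally (Rr 0)) /\
   filterlim V (at_right 0) (locally (V 0))) /\
  (forall t, 0 < t ->
     is_derive S t (mu * N - beta / N * S t * (1 - rho) * I t
                    - p / N * S t - mu * S t) /\
     is_derive E t (beta / N * S t * (1 - rho) * I t - (sigma + mu) * E t) /\
     is_derive I t (sigma * E t - (gamma + mu) * I t) /\
     is_derive Rr t (gamma * I t - mu * Rr t) /\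
     is_derive V t (p / N * S t - mu * V t)).

Definition GAS_in_Sigma (N mu beta sigma gamma p rho : R) : Prop :=
  (forall eps, 0 < eps -> exists delta, 0 < delta /\
     forall S E I Rr V : R -> R,
       is_solution N mu beta sigma gamma p rho S E I Rr V ->
       in_Sigma N (S 0) (E 0) (I 0) (Rr 0) (V 0) ->
       dist_Pstar N mu p (S 0) (E 0) (I 0) (Rr 0) (V 0) < delta ->
       forall t, 0 <= t ->
         dist_Pstar N mu p (S t) (E t) (I t) (Rr t) (V t) < eps) /\
  (forall S E I Rr V : R -> R,
     is_solution N mu beta sigma gamma p rho S E I Rr V ->
     in_Sigma N (S 0) (E 0) (I 0) (Rr 0) (V 0) ->
     is_lim S p_infty (Sstar N mu p) /\
     is_lim E p_infty 0 /\
     is_lim I p_infty 0 /\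
     is_lim Rr p_infty 0 /\
     is_lim V p_infty (Vstar N mu p)).

(* Positivity: the squared distance Q of (S, E, I) to the nonnegative octant vanishes at t = 0
   and satisfies Q' <= K Q on bounded time intervals, so it stays 0.
   Since S' <= (p/N + mu) (S* - S), S exceeds S* by at most an exponentially decaying amount.
   With c = beta (1 - rho) / N, the condition R0 < 1 reads sigma c S* < (sigma + mu) (gamma + mu)
   and leaves room for a weight theta such that W = sigma E + theta I satisfies W' <= - lam W
   whenever S <= S* + Dl.  Hence E and I tend to 0, with bounds linear in the initial distance
   to P*; S, R and V then solve linear equations y' = - k y + h whose forcing h converges and
   stays close to its limit, which gives both attractivity and stability. *)

From Stdlib Require Import Reals Lra Psatz.
From Coquelicot Require Import Coquelicot.
Open Scope R_scope.

Definition right_cont (f : R -> R) (a : R) : Prop :=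
  filterlim f (at_right a) (locally (f a)).

Lemma right_cont_plus (f g : R -> R) (a : R) :
  right_cont f a -> right_cont g a -> right_cont (fun t => f t + g t) a.
Proof.
  intros Hf Hg. eapply filterlim_comp_2; [exact Hf | exact Hg |].
  exact (filterlim_plus (K := R_AbsRing) (V := R_NormedModule) (f a) (g a)).
Qed.

Lemma right_cont_mult (f g : R -> R) (a : R) :
  right_cont f a -> right_cont g a -> right_cont (fun t => f t * g t) a.
Proof.
  intros Hf Hg. eapply filterlim_comp_2; [exact Hf | exact Hg |].
  exact (filterlim_mult (K := R_AbsRing) (f a) (g a)).
Qed.

Lemma right_cont_const (c a : R) : right_cont (fun _ => c) a.
Proof. apply filterlim_const. Qed.

Lemma right_cont_opp (f : R -> R) (a : R) : right_cont f a -> right_cont (fun t => - f t) a.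
Proof.
  intros Hf. eapply filterlim_comp; [exact Hf|].
  exact (filterlim_opp (K := R_AbsRing) (V := R_NormedModule) (f a)).
Qed.

Lemma right_cont_comp (h f : R -> R) (a : R) :
  continuous h (f a) -> right_cont f a -> right_cont (fun t => h (f t)) a.
Proof. intros Hh Hf. eapply filterlim_comp; [exact Hf | exact Hh]. Qed.

Lemma right_cont_of_continuous (f : R -> R) (a : R) : continuous f a -> right_cont f a.
Proof. apply filterlim_filter_le_1, filter_le_within. Qed.

Lemma right_cont_of_derive (f : R -> R) (a d : R) : is_derive f a d -> right_cont f a.
Proof.
  intros Hd. apply right_cont_of_continuous.
  apply (ex_derive_continuous (K := R_AbsRing) (V := R_NormedModule)). now exists d.
Qed.

Lemma right_cont_of_derive_on (f df : R -> R) (a b : R) :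
  a <= b -> right_cont f a -> (forall x, a < x -> is_derive f x (df x)) -> right_cont f b.
Proof.
  intros Hab Hf Hd. destruct (Req_dec a b) as [<-|Hne]; [exact Hf|].
  apply (right_cont_of_derive f b (df b)), Hd. lra.
Qed.

(** * Linear differential inequalities *)

Lemma nonincreasing_of_derive_nonpos (f df : R -> R) (a b : R) :
  a <= b -> right_cont f a -> (forall x, a < x -> is_derive f x (df x)) ->
  (forall x, a < x <= b -> df x <= 0) -> f b <= f a.
Proof.
  intros Hab Hf Hd Hneg. destruct (Req_dec a b) as [<-|Hne]; [lra|].
  (* f is only right-continuous at a: extend it continuously to the left before using the MVT,
     whose point c may be a itself; there Rmin (df c) 0 is still nonpositive. *)
  destruct (C0_extension_left f (f a) a (b + 1)) as [g [Hg [Hgf Hga]]]; [lra | | exact Hf |].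
  { intros x Hx. apply (ex_derive_continuous (K := R_AbsRing) (V := R_NormedModule)).
    exists (df x). apply Hd. lra. }
  destruct (MVT_gen g a b (fun x => Rmin (df x) 0)) as [c [_ Hc]];
    rewrite ?Rmin_left, ?Rmax_right by lra.
  - intros x Hx. rewrite Rmin_left by (apply Hneg; lra).
    apply (is_derive_ext_loc f); [|apply Hd; lra].
    exists (mkposreal (x - a) ltac:(lra)). intros y Hy.
    apply Rabs_lt_between' in Hy. symmetry. apply Hgf. simpl in Hy. lra.
  - intros x Hx. apply continuity_pt_filterlim, Hg. lra.
  - rewrite Hgf, Hga in Hc by lra. pose proof (Rmin_r (df c) 0). nra.
Qed.

Lemma le_mul_exp_of_derive_le (f df : R -> R) (a b k : R) :
  a <= b -> right_cont f a -> (forall x, a < x -> is_derive f x (df x)) ->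
  (forall x, a < x <= b -> df x <= - k * f x) ->
  f b <= f a * exp (- k * (b - a)).
Proof.
  intros Hab Hf Hd Hle.
  set (h := fun t => f t * exp (k * (t - a))).
  assert (Hh : h b <= h a).
  { apply (nonincreasing_of_derive_nonpos h (fun t => (df t + k * f t) * exp (k * (t - a)))
             a b Hab).
    - apply right_cont_mult; [exact Hf|].
      apply (right_cont_of_derive _ a (k * exp (k * (a - a)))).
      auto_derive; [easy | unfold Rminus; ring].
    - intros x Hx. unfold h. auto_derive; [exists (df x); apply Hd, Hx|].
      erewrite is_derive_unique by exact (Hd x Hx). unfold Rminus. ring.
    - intros x Hx. specialize (Hle x Hx). pose proof (exp_pos (k * (x - a))). nra. }
  unfold h in Hh. rewrite Rminus_diag, Rmult_0_r, exp_0, Rmult_1_r in Hh.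
  replace (f b) with (f b * exp (k * (b - a)) * exp (- k * (b - a))).
  - pose proof (exp_pos (- k * (b - a))). nra.
  - rewrite Rmult_assoc, <- exp_plus. replace (k * (b - a) + - k * (b - a)) with 0 by ring.
    rewrite exp_0. ring.
Qed.

Lemma exp_le_1 (x : R) : x <= 0 -> exp x <= 1.
Proof.
  intros Hx. rewrite <- exp_0.
  destruct (Rle_lt_or_eq_dec x 0 Hx) as [Hlt | ->]; [left; apply exp_increasing, Hlt | lra].
Qed.

Lemma linear_ode_sub_le (f h : R -> R) (a b k fs B : R) :
  0 < k -> 0 <= B -> a <= b -> right_cont f a ->
  (forall x, a < x -> is_derive f x (- k * f x + h x)) ->
  (forall x, a < x <= b -> h x - k * fs <= B) ->
  f b - fs <= (f a - fs) * exp (- k * (b - a)) + B / k.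
Proof.
  intros Hk HB Hab Hf Hd Hh.
  assert (Hle : f b - fs - B / k <= (f a - fs - B / k) * exp (- k * (b - a))).
  { apply (le_mul_exp_of_derive_le (fun t => f t - fs - B / k) (fun t => - k * f t + h t)
             a b k Hab).
    - unfold Rminus. apply right_cont_plus; [apply right_cont_plus|]; auto using right_cont_const.
    - intros x Hx. auto_derive; [exists (- k * f x + h x); apply Hd, Hx|].
      erewrite is_derive_unique by exact (Hd x Hx). ring.
    - intros x Hx. specialize (Hh x Hx). assert (k * (B / k) = B) by (field; lra). nra. }
  assert (0 <= B / k) by (apply Rdiv_le_0_compat; lra).
  pose proof (exp_pos (- k * (b - a))). nra.
Qed.

Lemma linear_ode_abs_sub_le (f h : R -> R) (a b k fs B : R) :
  0 < k -> 0 <= B -> a <= b -> right_cont f a ->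
  (forall x, a < x -> is_derive f x (- k * f x + h x)) ->
  (forall x, a < x <= b -> Rabs (h x - k * fs) <= B) ->
  Rabs (f b - fs) <= Rabs (f a - fs) * exp (- k * (b - a)) + B / k.
Proof.
  intros Hk HB Hab Hf Hd Hh.
  assert (Hup : f b - fs <= (f a - fs) * exp (- k * (b - a)) + B / k).
  { apply (linear_ode_sub_le f h); auto.
    intros x Hx. exact (Rle_trans _ _ _ (Rle_abs _) (Hh x Hx)). }
  assert (Hlow : - f b - - fs <= (- f a - - fs) * exp (- k * (b - a)) + B / k).
  { apply (linear_ode_sub_le (fun t => - f t) (fun t => - h t)); auto using right_cont_opp.
    - intros x Hx. replace (- k * - f x + - h x) with (opp (- k * f x + h x)).
      + apply (is_derive_opp f), Hd, Hx.
      + unfold opp; simpl; ring.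
    - intros x Hx. specialize (Hh x Hx).
      pose proof (Rle_abs (- (h x - k * fs))). rewrite Rabs_Ropp in *. lra. }
  pose proof (exp_pos (- k * (b - a))).
  pose proof (Rle_abs (f a - fs)). pose proof (Rle_abs (- (f a - fs))). rewrite Rabs_Ropp in *.
  apply Rabs_le_between. nra.
Qed.

Lemma linear_ode_abs_sub_bound (f h : R -> R) (a b k fs B : R) :
  0 < k -> 0 <= B -> a <= b -> right_cont f a ->
  (forall x, a < x -> is_derive f x (- k * f x + h x)) ->
  (forall x, a < x <= b -> Rabs (h x - k * fs) <= B) ->
  Rabs (f b - fs) <= Rabs (f a - fs) + B / k.
Proof.
  intros Hk HB Hab Hf Hd Hh.
  pose proof (linear_ode_abs_sub_le f h a b k fs B Hk HB Hab Hf Hd Hh).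
  assert (exp (- k * (b - a)) <= 1) by (apply exp_le_1; nra).
  pose proof (Rabs_pos (f a - fs)). nra.
Qed.

Lemma is_lim_exp_decay (C k T : R) :
  0 < k -> is_lim (fun t => C * exp (- k * (t - T))) p_infty 0.
Proof.
  intros Hk. replace (Finite 0) with (Rbar_mult C 0) by (simpl; f_equal; ring).
  apply is_lim_scal_l, (is_lim_comp exp _ p_infty 0 m_infty); [exact is_lim_exp_m| |].
  - replace m_infty with (Rbar_mult (- k) p_infty)
      by (simpl; destruct (Rle_dec 0 (- k)); [exfalso; lra | reflexivity]).
    apply is_lim_scal_l. eapply is_lim_minus; [apply is_lim_id | apply is_lim_const | easy].
  - exists 0. easy.
Qed.

Lemma is_lim_linear_ode (f h : R -> R) (a k L : R) :
  0 < k -> (forall x, a < x -> is_derive f x (- k * f x + h x)) ->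
  is_lim h p_infty L -> is_lim f p_infty (L / k).
Proof.
  intros Hk Hd Hh. apply is_lim_spec. intros eps.
  assert (He : 0 < eps * k / 2) by (pose proof (cond_pos eps); nra).
  destruct (proj2 (is_lim_spec h p_infty L) Hh (mkposreal _ He)) as [T1 HT1].
  set (T := Rmax a T1 + 1).
  assert (HaT : a < T) by (pose proof (Rmax_l a T1); unfold T; lra).
  assert (HT1T : T1 < T) by (pose proof (Rmax_r a T1); unfold T; lra).
  destruct (proj2 (is_lim_spec _ p_infty 0) (is_lim_exp_decay (Rabs (f T - L / k)) k T Hk)
              (pos_div_2 eps)) as [T2 HT2].
  exists (Rmax T T2). intros t Ht.
  pose proof (Rmax_l T T2). pose proof (Rmax_r T T2).
  assert (Hft : Rabs (f t - L / k)
                <= Rabs (f T - L / k) * exp (- k * (t - T)) + eps * k / 2 / k).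
  { apply (linear_ode_abs_sub_le f h T t k); try lra.
    - apply (right_cont_of_derive f T _ (Hd T HaT)).
    - intros x Hx. apply Hd. lra.
    - intros x Hx. replace (k * (L / k)) with L by (field; lra).
      left. apply (HT1 x). lra. }
  specialize (HT2 t ltac:(lra)). simpl in HT2.
  rewrite Rminus_0_r, Rabs_pos_eq in HT2
    by (apply Rmult_le_pos; [apply Rabs_pos | apply Rlt_le, exp_pos]).
  replace (eps * k / 2 / k) with (eps / 2) in Hft by (field; lra).
  lra.
Qed.

Lemma is_lim_squeeze_0 (f g : R -> R) (C T : R) :
  (forall t, T < t -> 0 <= f t <= C * g t) -> is_lim g p_infty 0 -> is_lim f p_infty 0.
Proof.
  intros Hfg Hg.
  apply (is_lim_le_le_loc (fun _ => 0) (fun t => C * g t));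
    [exists T; exact Hfg | apply is_lim_const |].
  replace (Finite 0) with (Rbar_mult C 0) by (simpl; f_equal; ring).
  apply is_lim_scal_l, Hg.
Qed.

(** * Invariance of the nonnegative octant *)

Lemma bounded_on_interval (f df : R -> R) (a b : R) :
  a <= b -> right_cont f a -> (forall x, a < x -> is_derive f x (df x)) ->
  exists M, forall t, a <= t <= b -> Rabs (f t) <= M.
Proof.
  intros Hab Hf Hd.
  destruct (C0_extension_left f (f a) a (b + 1)) as [g [Hg [Hgf Hga]]]; [lra | | exact Hf |].
  { intros x Hx. apply (ex_derive_continuous (K := R_AbsRing) (V := R_NormedModule)).
    exists (df x). apply Hd. lra. }
  destruct (continuity_ab_maj (fun t => Rabs (g t)) a b Hab) as [x [Hx _]].
  - intros t Ht. apply (continuity_pt_comp g Rabs).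
    + apply continuity_pt_filterlim, Hg. lra.
    + apply Rcontinuity_abs.
  - exists (Rabs (g x)). intros t Ht. specialize (Hx t Ht). simpl in Hx.
    destruct (Req_dec t a) as [->|Hne]; [rewrite <- Hga; exact Hx|].
    rewrite <- Hgf by lra. exact Hx.
Qed.

Definition negpart (y : R) : R := Rmin y 0.

Lemma negpart_cases (y : R) : (y <= 0 /\ negpart y = y) \/ (0 <= y /\ negpart y = 0).
Proof.
  unfold negpart. destruct (Rle_dec y 0).
  - left. rewrite Rmin_left; lra.
  - right. rewrite Rmin_right; lra.
Qed.

Lemma negpart_of_nonneg (y : R) : 0 <= y -> negpart y = 0.
Proof. intros Hy. apply Rmin_right, Hy. Qed.

Lemma nonneg_of_negpart_sq_nonpos (y : R) : negpart y ^ 2 <= 0 -> 0 <= y.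
Proof.
  intros Hy2. destruct (negpart_cases y) as [[Hy Hn]|[Hy _]]; [rewrite Hn in Hy2; nra | lra].
Qed.

Lemma is_derive_negpart_sq (x : R) : is_derive (fun y => negpart y ^ 2) x (2 * negpart x).
Proof.
  destruct (Rtotal_order x 0) as [Hx|[->|Hx]].
  - apply (is_derive_ext_loc (fun y => y ^ 2)).
    + exists (mkposreal (- x) ltac:(lra)). intros y Hy.
      apply Rabs_lt_between' in Hy. simpl in Hy.
      unfold negpart. rewrite Rmin_left by lra. reflexivity.
    + unfold negpart. rewrite Rmin_left by lra. auto_derive; [easy | ring].
  - apply is_derive_Reals. intros eps Heps. exists (mkposreal eps Heps). intros h Hh Hlt.
    simpl in Hlt. rewrite Rplus_0_l.
    rewrite (negpart_of_nonneg 0) by lra.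
    destruct (negpart_cases h) as [[_ ->]|[_ ->]].
    + replace ((h ^ 2 - 0 ^ 2) / h - 2 * 0) with h by (field; exact Hh). lra.
    + replace ((0 ^ 2 - 0 ^ 2) / h - 2 * 0) with 0 by (field; exact Hh). rewrite Rabs_R0. lra.
  - apply (is_derive_ext_loc (fun _ => 0)).
    + exists (mkposreal x ltac:(lra)). intros y Hy.
      apply Rabs_lt_between' in Hy. simpl in Hy.
      unfold negpart. rewrite Rmin_right by lra. simpl. ring.
    + unfold negpart. rewrite Rmin_right by lra. auto_derive; [easy | ring].
Qed.

Lemma negpart_mul_ge (s i M : R) : Rabs s <= M -> Rabs i <= M ->
  M * (negpart s + negpart i) <= s * i.
Proof.
  intros Hs Hi. apply Rabs_le_between in Hs, Hi.
  destruct (negpart_cases s) as [[s0 ->]|[s0 ->]];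
  destruct (negpart_cases i) as [[i0 ->]|[i0 ->]]; nra.
Qed.

Lemma negpart_SEI_vector_field_le (s e i m c k a g sig M : R) :
  0 <= m -> 0 <= c -> 0 <= k -> 0 <= a -> 0 <= g -> 0 <= sig ->
  Rabs s <= M -> Rabs i <= M ->
  2 * negpart s * (m - c * s * i - k * s) + 2 * negpart e * (c * s * i - a * e)
    + 2 * negpart i * (sig * e - g * i)
  <= (3 * c * M + sig) * (negpart s ^ 2 + negpart e ^ 2 + negpart i ^ 2).
Proof.
  intros Hm Hc Hk Ha Hg Hsig Hs Hi.
  assert (HM : 0 <= M) by (pose proof (Rabs_pos s); lra).
  pose proof (negpart_mul_ge s i M Hs Hi) as Hsi.
  apply Rabs_le_between in Hs, Hi.
  assert (HS : 2 * negpart s * (m - c * s * i - k * s) <= 2 * c * M * negpart s ^ 2).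
  { destruct (negpart_cases s) as [[s0 ->]|[s0 ->]]; [|lra].
    assert (0 <= c * s ^ 2 * (M + i)) by (apply Rmult_le_pos; nra).
    nra. }
  assert (HE : 2 * negpart e * (c * s * i - a * e)
               <= c * M * (negpart s ^ 2 + 2 * negpart e ^ 2 + negpart i ^ 2)).
  { destruct (negpart_cases e) as [[e0 He]|[e0 He]]; rewrite He;
      [| rewrite Rmult_0_r, Rmult_0_l; apply Rmult_le_pos; nra].
    (* e s i <= M e (negpart s + negpart i), then AM-GM on each product *)
    assert (0 <= - e * (s * i - M * (negpart s + negpart i))) by (apply Rmult_le_pos; lra).
    assert (0 <= c * M * ((e - negpart s) ^ 2 + (e - negpart i) ^ 2)).
    { apply Rmult_le_pos; [nra|].
      pose proof (pow2_ge_0 (e - negpart s)); pose proof (pow2_ge_0 (e - negpart i)); lra. }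
    nra. }
  assert (HI : 2 * negpart i * (sig * e - g * i) <= sig * (negpart e ^ 2 + negpart i ^ 2)).
  { destruct (negpart_cases i) as [[i0 ->]|[i0 ->]];
    destruct (negpart_cases e) as [[e0 ->]|[e0 ->]].
    - assert (0 <= sig * (e - i) ^ 2) by (apply Rmult_le_pos; [lra | apply pow2_ge_0]). nra.
    - assert (0 <= sig * (e * - i)) by (apply Rmult_le_pos; nra). nra.
    - assert (0 <= sig * e ^ 2) by (apply Rmult_le_pos; [lra | apply pow2_ge_0]). nra.
    - lra. }
  assert (0 <= c * M * (negpart e ^ 2 + 2 * negpart i ^ 2)) by (apply Rmult_le_pos; nra).
  assert (0 <= sig * negpart s ^ 2) by nra.
  lra.
Qed.

Lemma is_derive_negpart_sq_comp (f : R -> R) (x d : R) :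
  is_derive f x d -> is_derive (fun t => negpart (f t) ^ 2) x (2 * negpart (f x) * d).
Proof.
  intros Hd. replace (2 * negpart (f x) * d) with (scal d (2 * negpart (f x))).
  - exact (is_derive_comp _ f x _ _ (is_derive_negpart_sq (f x)) Hd).
  - unfold scal; simpl; unfold mult; simpl. ring.
Qed.

Lemma continuous_negpart_sq (y : R) : continuous (fun z => negpart z ^ 2) y.
Proof.
  apply (ex_derive_continuous (K := R_AbsRing) (V := R_NormedModule)).
  exists (2 * negpart y). apply is_derive_negpart_sq.
Qed.

Section SEI_positivity.

Variables (S E I : R -> R) (m c k a g sig : R).
Hypotheses (Hm : 0 <= m) (Hc : 0 <= c) (Hk : 0 <= k) (Ha : 0 <= a) (Hg : 0 <= g)
  (Hsig : 0 <= sig).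
Hypotheses (HS : right_cont S 0) (HE : right_cont E 0) (HI : right_cont I 0).
Hypotheses
  (HdS : forall t, 0 < t -> is_derive S t (m - c * S t * I t - k * S t))
  (HdE : forall t, 0 < t -> is_derive E t (c * S t * I t - a * E t))
  (HdI : forall t, 0 < t -> is_derive I t (sig * E t - g * I t)).

Let Q t := negpart (S t) ^ 2 + negpart (E t) ^ 2 + negpart (I t) ^ 2.

Let dQ t := 2 * negpart (S t) * (m - c * S t * I t - k * S t)
  + 2 * negpart (E t) * (c * S t * I t - a * E t) + 2 * negpart (I t) * (sig * E t - g * I t).

Lemma is_derive_Q t : 0 < t -> is_derive Q t (dQ t).
Proof.
  intros Ht.
  pose proof (is_derive_negpart_sq_comp S t _ (HdS t Ht)) as DS.
  pose proof (is_derive_negpart_sq_comp E t _ (HdE t Ht)) as DE.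
  pose proof (is_derive_negpart_sq_comp I t _ (HdI t Ht)) as DI.
  exact (is_derive_plus _ _ t _ _ (is_derive_plus _ _ t _ _ DS DE) DI).
Qed.

Lemma right_cont_Q : right_cont Q 0.
Proof.
  unfold Q. apply right_cont_plus; [apply right_cont_plus|];
    apply (right_cont_comp (fun z => negpart z ^ 2)); auto using continuous_negpart_sq.
Qed.

Lemma SEI_nonneg : 0 <= S 0 -> 0 <= E 0 -> 0 <= I 0 ->
  forall t, 0 <= t -> 0 <= S t /\ 0 <= E t /\ 0 <= I t.
Proof.
  intros HS0 HE0 HI0 t Ht.
  destruct (bounded_on_interval S _ 0 t Ht HS HdS) as [MS HMS].
  destruct (bounded_on_interval I _ 0 t Ht HI HdI) as [MI HMI].
  set (M := Rmax MS MI).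
  assert (HQ : Q t <= Q 0 * exp (- - (3 * c * M + sig) * (t - 0))).
  { apply (le_mul_exp_of_derive_le Q dQ 0 t _ Ht right_cont_Q is_derive_Q).
    intros x Hx. replace (- - (3 * c * M + sig) * Q x) with ((3 * c * M + sig) * Q x) by ring.
    apply negpart_SEI_vector_field_le; auto.
    - apply (Rle_trans _ MS); [apply HMS; lra | apply Rmax_l].
    - apply (Rle_trans _ MI); [apply HMI; lra | apply Rmax_r]. }
  unfold Q in HQ. rewrite !(negpart_of_nonneg (_ 0)) in HQ by assumption.
  replace ((0 ^ 2 + 0 ^ 2 + 0 ^ 2) * _) with 0 in HQ by ring.
  pose proof (pow2_ge_0 (negpart (S t))). pose proof (pow2_ge_0 (negpart (E t))).
  pose proof (pow2_ge_0 (negpart (I t))).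
  repeat split; apply nonneg_of_negpart_sq_nonpos; lra.
Qed.

End SEI_positivity.

(** * The SEIRV model *)

Lemma infected_lyapunov_weights (c Ss a g sig : R) :
  0 < c -> 0 <= Ss -> 0 < a -> 0 < g -> 0 < sig -> sig * c * Ss < a * g ->
  exists theta lam Dl, 0 < theta /\ 0 < lam /\ 0 < Dl /\
    forall s e i, 0 <= e -> 0 <= i -> s <= Ss + Dl ->
      sig * (c * s * i - a * e) + theta * (sig * e - g * i) <= - lam * (sig * e + theta * i).
Proof.
  intros Hc HSs Ha Hg Hsig Hth.
  set (D := a * g - sig * c * Ss).
  (* theta lies strictly between sig c Ss / g and a; the margin D is split between the E and
     I terms, which fixes Dl and lam. *)
  set (theta := (sig * c * Ss / g + a) / 2).
  set (Dl := D / (4 * (sig * c))).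
  set (lam := Rmin (D / (2 * g)) (D / (4 * theta))).
  assert (HD : 0 < D) by (unfold D; lra).
  assert (Htheta : 0 < theta).
  { assert (0 <= sig * c * Ss / g)
      by (apply Rdiv_le_0_compat; [apply Rmult_le_pos; nra | lra]).
    unfold theta. lra. }
  assert (HaT : a - theta = D / (2 * g)) by (unfold theta, D; field; lra).
  assert (HgT : theta * g - sig * c * (Ss + Dl) = D / 4) by (unfold theta, Dl, D; field; lra).
  exists theta, lam, Dl. repeat split; try assumption.
  - apply Rmin_glb_lt; apply Rdiv_lt_0_compat; lra.
  - apply Rdiv_lt_0_compat; nra.
  - intros s e i He Hi Hs.
    assert (lam <= a - theta) by (rewrite HaT; apply Rmin_l).
    assert (lam * theta <= D / 4).
    { replace (D / 4) with (D / (4 * theta) * theta) by (field; lra).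
      apply Rmult_le_compat_r; [lra | apply Rmin_r]. }
    assert (sig * c * s * i <= sig * c * (Ss + Dl) * i)
      by (apply Rmult_le_compat_r; [|apply Rmult_le_compat_l]; nra).
    assert (0 <= sig * e * (a - theta - lam)) by (apply Rmult_le_pos; nra).
    assert (0 <= i * (D / 4 - lam * theta)) by (apply Rmult_le_pos; lra).
    assert (i * (theta * g - sig * c * (Ss + Dl)) = i * (D / 4)) by (rewrite HgT; ring).
    lra.
Qed.

Lemma Rmax_le_iff (x y z : R) : Rmax x y <= z <-> x <= z /\ y <= z.
Proof.
  split; [intros H; split; eapply Rle_trans; [apply Rmax_l | exact H | apply Rmax_r | exact H]|].
  intros [Hx Hy]. apply Rmax_lub; assumption.
Qed.

Lemma dist_Pstar_le_iff (N mu p s e i r v d : R) :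
  dist_Pstar N mu p s e i r v <= d <->
  Rabs (s - Sstar N mu p) <= d /\ Rabs e <= d /\ Rabs i <= d /\ Rabs r <= d /\
  Rabs (v - Vstar N mu p) <= d.
Proof. unfold dist_Pstar. rewrite !Rmax_le_iff. tauto. Qed.

Section SEIRV.

Variables N mu beta sigma gamma p rho : R.
Hypotheses (HN : 0 < N) (Hmu : 0 < mu) (Hbeta : 0 < beta) (Hsigma : 0 < sigma)
  (Hgamma : 0 < gamma) (Hp : 0 < p) (Hrho : rho < 1).

Let c := beta * (1 - rho) / N.
Let k := p / N + mu.
Let Ss := Sstar N mu p.
Let Vs := Vstar N mu p.

Lemma infection_rate_pos : 0 < c.
Proof. apply Rdiv_lt_0_compat; nra. Qed.

Lemma S_outflow_rate_pos : 0 < k.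
Proof. assert (0 < p / N) by (apply Rdiv_lt_0_compat; lra). unfold k. lra. Qed.

Lemma Sstar_pos : 0 < Ss.
Proof. apply Rdiv_lt_0_compat; [apply Rmult_lt_0_compat; [lra | apply pow_lt; lra] | nra]. Qed.

Lemma Sstar_balance : k * Ss = mu * N.
Proof. unfold k, Ss, Sstar. field. split; nra. Qed.

Lemma Vstar_balance : p / N * Ss = mu * Vs.
Proof. unfold Ss, Vs, Sstar, Vstar. field. split; nra. Qed.

Lemma threshold_of_R0 :
  basic_repr_number N mu beta sigma gamma p rho < 1 ->
  sigma * c * Ss < (sigma + mu) * (gamma + mu).
Proof.
  intros HR0.
  assert (Hprod : 0 < (sigma + mu) * (gamma + mu)) by nra.
  replace (basic_repr_number N mu beta sigma gamma p rho)
    with (sigma * c * Ss / ((sigma + mu) * (gamma + mu))) in HR0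
    by (unfold basic_repr_number, c, Ss, Sstar; field; repeat split; nra).
  apply (Rmult_lt_compat_r ((sigma + mu) * (gamma + mu))) in HR0; [|exact Hprod].
  field_simplify in HR0; lra.
Qed.

Variables theta lam Dl : R.
Hypotheses (Htheta : 0 < theta) (Hlam : 0 < lam) (HDl : 0 < Dl).
Hypothesis Hdecay : forall s e i, 0 <= e -> 0 <= i -> s <= Ss + Dl ->
  sigma * (c * s * i - (sigma + mu) * e) + theta * (sigma * e - (gamma + mu) * i)
  <= - lam * (sigma * e + theta * i).

(* Amplification factors: a solution starting within r <= Dl of P* keeps each coordinate within
   its factor times r of P*. *)
Let CE := (sigma + theta) / sigma.
Let CI := (sigma + theta) / theta.
Let CS := 1 + c * (Ss + Dl) * CI / k.
Let CR := 1 + gamma * CI / mu.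
Let CV := 1 + p / N * CS / mu.
Let K := 1 + CS + CE + CI + CR + CV.

Lemma deviation_constants_nonneg : 0 <= CS /\ 0 <= CE /\ 0 <= CI /\ 0 <= CR /\ 0 <= CV.
Proof.
  pose proof infection_rate_pos. pose proof S_outflow_rate_pos. pose proof Sstar_pos.
  assert (HpN : 0 < p / N) by (apply Rdiv_lt_0_compat; lra).
  assert (0 <= CE) by (apply Rdiv_le_0_compat; lra).
  assert (0 <= CI) by (apply Rdiv_le_0_compat; lra).
  assert (0 <= CS).
  { assert (0 <= c * (Ss + Dl) * CI / k)
      by (apply Rdiv_le_0_compat; [apply Rmult_le_pos; nra | lra]).
    unfold CS. lra. }
  assert (0 <= gamma * CI / mu) by (apply Rdiv_le_0_compat; nra).
  assert (0 <= p / N * CS / mu) by (apply Rdiv_le_0_compat; nra).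
  unfold CR, CV. repeat split; lra.
Qed.

Section Solution.

Variables S E I Rr V : R -> R.
Hypothesis Hsol : is_solution N mu beta sigma gamma p rho S E I Rr V.

Lemma solution_right_cont :
  right_cont S 0 /\ right_cont E 0 /\ right_cont I 0 /\ right_cont Rr 0 /\ right_cont V 0.
Proof. apply Hsol. Qed.

Lemma derive_S t : 0 < t -> is_derive S t (mu * N - c * S t * I t - k * S t).
Proof.
  intros Ht. replace (mu * N - c * S t * I t - k * S t)
    with (mu * N - beta / N * S t * (1 - rho) * I t - p / N * S t - mu * S t)
    by (unfold c, k, Rdiv; ring).
  apply Hsol, Ht.
Qed.

Lemma derive_E t : 0 < t -> is_derive E t (c * S t * I t - (sigma + mu) * E t).
Proof.
  intros Ht. replace (c * S t * I t) with (beta / N * S t * (1 - rho) * I t)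
    by (unfold c, Rdiv; ring).
  apply Hsol, Ht.
Qed.

Lemma derive_I t : 0 < t -> is_derive I t (sigma * E t - (gamma + mu) * I t).
Proof. intros Ht. apply Hsol, Ht. Qed.

Lemma derive_S_linear t : 0 < t -> is_derive S t (- k * S t + (mu * N - c * S t * I t)).
Proof.
  intros Ht. replace (- k * S t + _) with (mu * N - c * S t * I t - k * S t) by ring.
  apply derive_S, Ht.
Qed.

Lemma derive_R_linear t : 0 < t -> is_derive Rr t (- mu * Rr t + gamma * I t).
Proof.
  intros Ht. replace (- mu * Rr t + _) with (gamma * I t - mu * Rr t) by ring. apply Hsol, Ht.
Qed.

Lemma derive_V_linear t : 0 < t -> is_derive V t (- mu * V t + p / N * S t).
Proof.
  intros Ht. replace (- mu * V t + _) with (p / N * S t - mu * V t) by ring. apply Hsol, Ht.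
Qed.

Hypotheses (HS0 : 0 <= S 0) (HE0 : 0 <= E 0) (HI0 : 0 <= I 0).

Lemma solution_SEI_nonneg t : 0 <= t -> 0 <= S t /\ 0 <= E t /\ 0 <= I t.
Proof.
  destruct solution_right_cont as (HS & HE & HI & _).
  pose proof infection_rate_pos. pose proof S_outflow_rate_pos.
  apply (SEI_nonneg S E I (mu * N) c k (sigma + mu) (gamma + mu) sigma); auto; try lra.
  - nra.
  - exact derive_S.
  - exact derive_E.
  - exact derive_I.
Qed.

Lemma S_sub_Sstar_le t : 0 <= t -> S t - Ss <= (S 0 - Ss) * exp (- k * t).
Proof.
  intros Ht.
  assert (H := linear_ode_sub_le S (fun x => mu * N - c * S x * I x) 0 t k Ss 0
                 S_outflow_rate_pos (Rle_refl 0) Ht (proj1 solution_right_cont) derive_S_linear).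
  rewrite Rminus_0_r, Rdiv_0_l, Rplus_0_r in H. apply H.
  intros x Hx. rewrite Sstar_balance.
  destruct (solution_SEI_nonneg x ltac:(lra)) as (HSx & _ & HIx).
  pose proof infection_rate_pos.
  assert (0 <= c * S x * I x) by (apply Rmult_le_pos; nra). lra.
Qed.

Let W t := sigma * E t + theta * I t.

Let dW t :=
  sigma * (c * S t * I t - (sigma + mu) * E t) + theta * (sigma * E t - (gamma + mu) * I t).

Lemma derive_W t : 0 < t -> is_derive W t (dW t).
Proof.
  intros Ht.
  exact (is_derive_plus _ _ t _ _ (is_derive_scal _ _ sigma _ (derive_E t Ht))
           (is_derive_scal _ _ theta _ (derive_I t Ht))).
Qed.

Lemma right_cont_W T : 0 <= T -> right_cont W T.
Proof.
  intros HT. apply (right_cont_of_derive_on W dW 0 T HT); [|exact derive_W].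
  destruct solution_right_cont as (_ & HE & HI & _).
  apply right_cont_plus; apply right_cont_mult; auto using right_cont_const.
Qed.

Lemma W_le_exp T t : 0 <= T <= t -> (forall x, T < x <= t -> S x <= Ss + Dl) ->
  W t <= W T * exp (- lam * (t - T)).
Proof.
  intros HT HS.
  apply (le_mul_exp_of_derive_le W dW T t lam ltac:(lra) (right_cont_W T ltac:(lra))).
  - intros x Hx. apply derive_W. lra.
  - intros x Hx. destruct (solution_SEI_nonneg x ltac:(lra)) as (_ & HEx & HIx).
    apply Hdecay; auto.
Qed.

Section Stability.

Variable r : R.
Hypotheses (HrDl : r <= Dl) (HdS0 : Rabs (S 0 - Ss) <= r) (HdE0 : Rabs (E 0) <= r)
  (HdI0 : Rabs (I 0) <= r) (HdR0 : Rabs (Rr 0) <= r) (HdV0 : Rabs (V 0 - Vs) <= r).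

Lemma dist0_nonneg : 0 <= r.
Proof. pose proof (Rabs_pos (E 0)). lra. Qed.

Lemma S_le_Sstar_add t : 0 <= t -> S t <= Ss + r.
Proof.
  intros Ht. pose proof (S_sub_Sstar_le t Ht). pose proof S_outflow_rate_pos.
  pose proof (exp_pos (- k * t)). assert (exp (- k * t) <= 1) by (apply exp_le_1; nra).
  apply Rabs_le_between in HdS0. nra.
Qed.

Lemma E_I_le t : 0 <= t -> E t <= CE * r /\ I t <= CI * r.
Proof.
  intros Ht.
  assert (HW : W t <= W 0 * exp (- lam * (t - 0))).
  { apply W_le_exp; [lra|]. intros x Hx. pose proof (S_le_Sstar_add x ltac:(lra)). lra. }
  assert (exp (- lam * (t - 0)) <= 1) by (apply exp_le_1; nra).
  assert (W 0 <= (sigma + theta) * r).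
  { apply Rabs_le_between in HdE0, HdI0. unfold W. nra. }
  assert (HW0 : 0 <= W 0) by (unfold W; nra).
  assert (HWt : W t <= (sigma + theta) * r) by nra.
  destruct (solution_SEI_nonneg t Ht) as (_ & HEt & HIt). unfold W in HWt.
  unfold CE, CI. split.
  - apply (Rmult_le_reg_l sigma); [lra|]. field_simplify; nra.
  - apply (Rmult_le_reg_l theta); [lra|]. field_simplify; nra.
Qed.

Lemma S_deviation_le t : 0 <= t -> Rabs (S t - Ss) <= CS * r.
Proof.
  intros Ht. pose proof S_outflow_rate_pos. pose proof infection_rate_pos. pose proof Sstar_pos.
  destruct deviation_constants_nonneg as (_ & _ & HCI & _). pose proof dist0_nonneg.
  assert (Hh : forall x, 0 < x <= t ->
            Rabs (mu * N - c * S x * I x - k * Ss) <= c * (Ss + Dl) * (CI * r)).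
  { intros x Hx. rewrite Sstar_balance.
    destruct (solution_SEI_nonneg x ltac:(lra)) as (HSx & _ & HIx).
    pose proof (S_le_Sstar_add x ltac:(lra)). pose proof (proj2 (E_I_le x ltac:(lra))).
    replace (mu * N - c * S x * I x - mu * N) with (- (c * S x * I x)) by ring.
    rewrite Rabs_Ropp, Rabs_pos_eq by (apply Rmult_le_pos; nra).
    apply Rmult_le_compat; nra. }
  assert (HB : 0 <= c * (Ss + Dl) * (CI * r))
    by (apply Rmult_le_pos; apply Rmult_le_pos; lra).
  pose proof (linear_ode_abs_sub_bound S _ 0 t k Ss _ S_outflow_rate_pos HB Ht
                (proj1 solution_right_cont) derive_S_linear Hh).
  replace (CS * r) with (r + c * (Ss + Dl) * (CI * r) / k) by (unfold CS, Rdiv; ring).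
  lra.
Qed.

Lemma R_deviation_le t : 0 <= t -> Rabs (Rr t) <= CR * r.
Proof.
  intros Ht. destruct deviation_constants_nonneg as (_ & _ & HCI & _). pose proof dist0_nonneg.
  destruct solution_right_cont as (_ & _ & _ & HR & _).
  assert (Hh : forall x, 0 < x <= t -> Rabs (gamma * I x - mu * 0) <= gamma * (CI * r)).
  { intros x Hx. destruct (solution_SEI_nonneg x ltac:(lra)) as (_ & _ & HIx).
    pose proof (proj2 (E_I_le x ltac:(lra))).
    rewrite Rmult_0_r, Rminus_0_r, Rabs_pos_eq by nra. nra. }
  assert (HB : 0 <= gamma * (CI * r)) by (apply Rmult_le_pos; nra).
  pose proof (linear_ode_abs_sub_bound Rr _ 0 t mu 0 _ Hmu HB Ht HR derive_R_linear Hh).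
  rewrite !Rminus_0_r in *.
  replace (CR * r) with (r + gamma * (CI * r) / mu) by (unfold CR, Rdiv; ring).
  lra.
Qed.

Lemma V_deviation_le t : 0 <= t -> Rabs (V t - Vs) <= CV * r.
Proof.
  intros Ht. pose proof dist0_nonneg. destruct solution_right_cont as (_ & _ & _ & _ & HV).
  assert (HpN : 0 < p / N) by (apply Rdiv_lt_0_compat; lra).
  assert (Hh : forall x, 0 < x <= t -> Rabs (p / N * S x - mu * Vs) <= p / N * (CS * r)).
  { intros x Hx.
    rewrite <- Vstar_balance, <- Rmult_minus_distr_l, Rabs_mult, Rabs_pos_eq by lra.
    apply Rmult_le_compat_l; [lra | apply S_deviation_le; lra]. }
  assert (HB : 0 <= p / N * (CS * r)).
  { apply Rmult_le_pos; [lra|]. pose proof (S_deviation_le 0 (Rle_refl 0)).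
    pose proof (Rabs_pos (S 0 - Ss)). lra. }
  pose proof (linear_ode_abs_sub_bound V _ 0 t mu Vs _ Hmu HB Ht HV derive_V_linear Hh).
  replace (CV * r) with (r + p / N * (CS * r) / mu) by (unfold CV, Rdiv; ring).
  lra.
Qed.

Lemma dist_Pstar_solution_le t : 0 <= t ->
  dist_Pstar N mu p (S t) (E t) (I t) (Rr t) (V t) <= K * r.
Proof.
  intros Ht. destruct deviation_constants_nonneg as (HCS & HCE & HCI & HCR & HCV).
  pose proof dist0_nonneg.
  destruct (solution_SEI_nonneg t Ht) as (_ & HEt & HIt).
  destruct (E_I_le t Ht) as [HE HI].
  pose proof (S_deviation_le t Ht). pose proof (R_deviation_le t Ht).
  pose proof (V_deviation_le t Ht).
  apply dist_Pstar_le_iff. rewrite (Rabs_pos_eq (E t)), (Rabs_pos_eq (I t)) by lra.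
  repeat split; (eapply Rle_trans; [eassumption | apply Rmult_le_compat_r; unfold K; lra]).
Qed.

End Stability.

Lemma eventually_S_le : exists T, 0 <= T /\ forall t, T <= t -> S t <= Ss + Dl.
Proof.
  destruct (proj2 (is_lim_spec _ p_infty 0)
              (is_lim_exp_decay (S 0 - Ss) k 0 S_outflow_rate_pos) (mkposreal Dl HDl))
    as [T HT].
  exists (Rmax T 0 + 1). split; [pose proof (Rmax_r T 0); lra|].
  intros t Ht. pose proof (Rmax_l T 0). pose proof (Rmax_r T 0).
  pose proof (S_sub_Sstar_le t ltac:(lra)). specialize (HT t ltac:(lra)). simpl in HT.
  rewrite Rminus_0_r, Rminus_0_r in HT. apply Rabs_lt_between in HT. lra.
Qed.

Lemma is_lim_W : is_lim W p_infty 0.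
Proof.
  destruct eventually_S_le as (T & HT0 & HT).
  apply (is_lim_le_le_loc (fun _ => 0) (fun t => W T * exp (- lam * (t - T))));
    [| apply is_lim_const | apply is_lim_exp_decay, Hlam].
  exists T. intros t Ht. split.
  - destruct (solution_SEI_nonneg t ltac:(lra)) as (_ & HEt & HIt). unfold W. nra.
  - apply W_le_exp; [lra|]. intros x Hx. apply HT. lra.
Qed.

Lemma is_lim_E : is_lim E p_infty 0.
Proof.
  apply (is_lim_squeeze_0 E W (/ sigma) 0); [|exact is_lim_W].
  intros t Ht. destruct (solution_SEI_nonneg t ltac:(lra)) as (_ & HEt & HIt).
  split; [lra|]. unfold W. apply (Rmult_le_reg_l sigma); [lra|].
  rewrite <- Rmult_assoc, Rinv_r, Rmult_1_l by lra. nra.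
Qed.

Lemma is_lim_I : is_lim I p_infty 0.
Proof.
  apply (is_lim_squeeze_0 I W (/ theta) 0); [|exact is_lim_W].
  intros t Ht. destruct (solution_SEI_nonneg t ltac:(lra)) as (_ & HEt & HIt).
  split; [lra|]. unfold W. apply (Rmult_le_reg_l theta); [lra|].
  rewrite <- Rmult_assoc, Rinv_r, Rmult_1_l by lra. nra.
Qed.

Lemma is_lim_S : is_lim S p_infty Ss.
Proof.
  destruct eventually_S_le as (T & HT0 & HT). pose proof infection_rate_pos.
  assert (Hinc : is_lim (fun t => c * S t * I t) p_infty 0).
  { apply (is_lim_squeeze_0 _ I (c * (Ss + Dl)) T); [|exact is_lim_I].
    intros t Ht. destruct (solution_SEI_nonneg t ltac:(lra)) as (HSt & _ & HIt).
    specialize (HT t ltac:(lra)).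
    split; [apply Rmult_le_pos; nra|].
    apply Rmult_le_compat_r; [lra | apply Rmult_le_compat_l; lra]. }
  replace Ss with (mu * N / k)
    by (rewrite <- Sstar_balance; field; pose proof S_outflow_rate_pos; lra).
  apply (is_lim_linear_ode S _ 0 k (mu * N) S_outflow_rate_pos derive_S_linear).
  replace (Finite (mu * N)) with (Rbar_minus (mu * N) 0) by (simpl; f_equal; ring).
  apply (is_lim_minus _ _ _ _ _ _ (is_lim_const _ _) Hinc). easy.
Qed.

Lemma is_lim_R : is_lim Rr p_infty 0.
Proof.
  replace (Finite 0) with (Finite (gamma * 0 / mu)) by (f_equal; field; lra).
  apply (is_lim_linear_ode Rr _ 0 mu (gamma * 0) Hmu derive_R_linear).
  apply (is_lim_scal_l I gamma p_infty 0 is_lim_I).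
Qed.

Lemma is_lim_V : is_lim V p_infty Vs.
Proof.
  replace Vs with (p / N * Ss / mu) by (rewrite Vstar_balance; field; lra).
  apply (is_lim_linear_ode V _ 0 mu (p / N * Ss) Hmu derive_V_linear).
  apply (is_lim_scal_l S (p / N) p_infty Ss is_lim_S).
Qed.

End Solution.

Lemma Pstar_stable (eps : R) : 0 < eps -> exists delta, 0 < delta /\
  forall S E I Rr V : R -> R,
    is_solution N mu beta sigma gamma p rho S E I Rr V ->
    in_Sigma N (S 0) (E 0) (I 0) (Rr 0) (V 0) ->
    dist_Pstar N mu p (S 0) (E 0) (I 0) (Rr 0) (V 0) < delta ->
    forall t, 0 <= t -> dist_Pstar N mu p (S t) (E t) (I t) (Rr t) (V t) < eps.
Proof.
  intros Heps.
  assert (HK : 0 < K)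
    by (destruct deviation_constants_nonneg as (? & ? & ? & ? & ?); unfold K; lra).
  exists (Rmin Dl (eps / K)). split; [apply Rmin_glb_lt; [lra | apply Rdiv_lt_0_compat; lra]|].
  intros S E I Rr V Hsol (HS0 & HE0 & HI0 & _) Hd0 t Ht.
  set (r := dist_Pstar N mu p (S 0) (E 0) (I 0) (Rr 0) (V 0)) in Hd0.
  destruct (proj1 (dist_Pstar_le_iff N mu p _ _ _ _ _ r) (Rle_refl r))
    as (H1 & H2 & H3 & H4 & H5).
  pose proof (Rmin_l Dl (eps / K)). pose proof (Rmin_r Dl (eps / K)).
  assert (HKr : K * r < eps).
  { apply (Rlt_le_trans _ (K * (eps / K))); [apply Rmult_lt_compat_l; lra | right; field; lra]. }
  pose proof (dist_Pstar_solution_le S E I Rr V Hsol HS0 HE0 HI0 r ltac:(lra) H1 H2 H3 H4 H5 t Ht).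
  lra.
Qed.

Lemma Pstar_attractive (S E I Rr V : R -> R) :
  is_solution N mu beta sigma gamma p rho S E I Rr V ->
  in_Sigma N (S 0) (E 0) (I 0) (Rr 0) (V 0) ->
  is_lim S p_infty Ss /\ is_lim E p_infty 0 /\ is_lim I p_infty 0 /\
  is_lim Rr p_infty 0 /\ is_lim V p_infty Vs.
Proof.
  intros Hsol (HS0 & HE0 & HI0 & _).
  repeat split;
    [eapply is_lim_S | eapply is_lim_E | eapply is_lim_I | eapply is_lim_R | eapply is_lim_V];
    eassumption.
Qed.

End SEIRV.

Theorem mainTheorem7 (N mu beta sigma gamma p rho : R) :
  0 < N -> 0 < mu -> 0 < beta -> 0 < sigma -> 0 < gamma -> 0 < p ->
  0 < rho -> rho < 1 ->
  basic_repr_number N mu beta sigma gamma p rho < 1 ->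
  GAS_in_Sigma N mu beta sigma gamma p rho.
Proof.
  intros HN Hmu Hbeta Hsigma Hgamma Hp _ Hrho HR0.
  destruct (infected_lyapunov_weights (beta * (1 - rho) / N) (Sstar N mu p)
              (sigma + mu) (gamma + mu) sigma
              (infection_rate_pos N beta rho HN Hbeta Hrho)
              (Rlt_le _ _ (Sstar_pos N mu p HN Hmu Hp)) ltac:(lra) ltac:(lra) Hsigma
              (threshold_of_R0 N mu beta sigma gamma p rho HN Hmu Hsigma Hgamma Hp HR0))
    as (theta & lam & Dl & Htheta & Hlam & HDl & Hdecay).
  split.
  - exact (Pstar_stable N mu beta sigma gamma p rho HN Hmu Hbeta Hsigma Hgamma Hp Hrho
             theta lam Dl Htheta Hlam HDl Hdecay).
  - exact (Pstar_attractive N mu beta sigma gamma p rho HN Hmu Hbeta Hsigma Hgamma Hp Hrho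
             theta lam Dl Htheta Hlam HDl Hdecay).
Qed.
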